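(* Let $M$ be the second moment matrix of the observed variables, $M_{ij}=\mathbb E[v_iv_j]$, and let $\hat M$ be its empirical estimate from $n$ i.i.d. samples. Let $\hat a$ be the estimate of the $m$ accuracies $a_i=\mathbb E[v_iY(i)]$ obtained from $\hat M$ by the triplet method. Define $a_{\min}=\min\{\min_i|\hat a_i|,\min_i|a_i|\}$ and assume $\mathrm{sign}(a_i)=\mathrm{sign}(\hat a_i)$ for all $i$. Assume further that $n$ exceeds some $n_0$ such that $a_{\min}>0$ and $\hat M_{ij}\neq0$. Then $$\mathbb E\big[\|\hat a-a\|_2\big]\le C_a\frac{1}{a_{\min}^5}\sqrt{\frac mn}$$ for some constant $C_a$.
   Context: Observed variables $v_i\in\{\pm1\}$ each attached to a hidden variable $Y(i)\in\{\pm1\}$ in a binary Ising model. Triplet method: for each accuracy to estimate, pick indices forming a triplet $(i,j,k)$ of observed variables pairwise conditionally independent given $Y(i)$ (so that $\mathbb E[v_iv_j]=a_ia_j$ etc.), and set $|\hat a_i|=\big(|\hat M_{ij}||\hat M_{ik}|/|\hat M_{jk}|\big)^{1/2}$ and analogously for $j,k$; at most one triplet is used per accuracy. *)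

From HB Require Import structures.
From mathcomp Require Import all_boot all_order all_algebra.
Set Implicit Arguments. Unset Strict Implicit. Unset Printing Implicit Defensive.
Import Order.TTheory GRing.Theory Num.Theory.
Local Open Scope ring_scope.

(* Population distribution: a finite type T of outcomes (joint values of the
   observed variables v and the hidden variables Y) with probability mass p. *)
Definition is_prob (R : rcfType) (T : finType) (p : T -> R) : Prop :=
  (forall t, 0 <= p t) /\ \sum_(t : T) p t = 1.

Definition pm1 (R : rcfType) (x : R) : bool := (x == 1) || (x == -1).

Definition Epop (R : rcfType) (T : finType) (p : T -> R) (f : T -> R) : R :=
  \sum_(t : T) p t * f t.

Definition accuracy (R : rcfType) (T : finType) (m : nat) (p : T -> R)
  (v Y : T -> 'I_m -> R) (i : 'I_m) : R :=
  Epop p (fun t => v t i * Y t i).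

Definition Mpop (R : rcfType) (T : finType) (m : nat) (p : T -> R)
  (v : T -> 'I_m -> R) (i j : 'I_m) : R :=
  Epop p (fun t => v t i * v t j).

Definition sample_prob (R : rcfType) (T : finType) (n : nat) (p : T -> R)
  (s : {ffun 'I_n -> T}) : R := \prod_(k < n) p (s k).

Definition Esample (R : rcfType) (T : finType) (n : nat) (p : T -> R)
  (f : {ffun 'I_n -> T} -> R) : R :=
  \sum_(s : {ffun 'I_n -> T}) sample_prob p s * f s.

Definition Mhat (R : rcfType) (T : finType) (m n : nat) (v : T -> 'I_m -> R)
  (s : {ffun 'I_n -> T}) (i j : 'I_m) : R :=
  n%:R^-1 * \sum_(k < n) v (s k) i * v (s k) j.

Definition triplet_abs (R : rcfType) (m : nat) (M : 'I_m -> 'I_m -> R)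
  (i j k : 'I_m) : R :=
  Num.sqrt (`|M i j| * `|M i k| / `|M j k|).

(* Triplet estimate of a_i: sign choice sg (a +-1 value) times magnitude,
   where tri i = (j, k) is the triplet (i, j, k) used for accuracy i. *)
Definition ahat (R : rcfType) (T : finType) (m n : nat) (v : T -> 'I_m -> R)
  (tri : 'I_m -> 'I_m * 'I_m) (sg : {ffun 'I_n -> T} -> 'I_m -> R)
  (s : {ffun 'I_n -> T}) (i : 'I_m) : R :=
  sg s i * triplet_abs (Mhat v s) i (tri i).1 (tri i).2.

Definition norm2 (R : rcfType) (m : nat) (x : 'I_m -> R) : R :=
  Num.sqrt (\sum_(i < m) x i ^+ 2).

(* Coordinatewise, the error of the triplet estimate is controlled deterministically by the
   errors d_ij, d_ik, d_jk of the three empirical moments it uses.  If |d_jk| <= a^2/2, the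
   denominator stays above a^2/2 and (x, y, z) |-> sqrt (|x| |y| / |z|) is Lipschitz there,
   giving (â_i - a_i)^2 <= 12 (d_ij^2 + d_ik^2 + d_jk^2) / a^10.  Otherwise we only know
   |M̂_jk| >= 1/n, since n M̂_jk is a nonzero integer; then (â_i - a_i)^2 <= 4n, which is at
   most 64 n d_jk^4 / a^8 on that event.  Adding one sample at a time gives E d^2 <= 4/n and
   E d^4 <= 48/n^2, so E |â - a|^2 <= 57^2 m / (a^10 n), and Jensen's inequality for the
   square root concludes. *)

From HB Require Import structures.
From mathcomp Require Import all_boot all_order all_algebra.
From mathcomp Require Import ring lra.
Import Order.TTheory GRing.Theory Num.Theory.
Local Open Scope ring_scope.
Set Implicit Arguments. Unset Strict Implicit.

Section Expectation.
Variables (R : rcfType) (T : finType) (p : T -> R).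

Lemma eq_Epop (f g : T -> R) : f =1 g -> Epop p f = Epop p g.
Proof. by move=> fg; apply: eq_bigr => t _; rewrite fg. Qed.

Lemma EpopD (f g : T -> R) : Epop p (fun t => f t + g t) = Epop p f + Epop p g.
Proof. by rewrite /Epop -big_split; apply: eq_bigr => t _; rewrite mulrDr. Qed.

Lemma EpopZ (c : R) (f : T -> R) : Epop p (fun t => c * f t) = c * Epop p f.
Proof. by rewrite /Epop big_distrr; apply: eq_bigr => t _; rewrite mulrCA. Qed.

Lemma Epop_sum (I : finType) (F : I -> T -> R) :
  Epop p (fun t => \sum_(i : I) F i t) = \sum_(i : I) Epop p (F i).
Proof. by rewrite /Epop exchange_big; apply: eq_bigr => t _; rewrite big_distrr. Qed.

Hypothesis p_prob : is_prob p.

Lemma Epop_cst (c : R) : Epop p (fun _ => c) = c.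
Proof. by rewrite /Epop -big_distrl /= p_prob.2 mul1r. Qed.

Lemma Epop_cstD (c : R) (f : T -> R) : Epop p (fun t => c + f t) = c + Epop p f.
Proof. by rewrite EpopD Epop_cst. Qed.

Lemma ler_Epop (f g : T -> R) :
  (forall t, 0 < p t -> f t <= g t) -> Epop p f <= Epop p g.
Proof.
move=> fg; apply: ler_sum => t _; have [->|pt] := eqVneq (p t) 0; first by rewrite !mul0r.
by rewrite ler_pM2l ?fg // lt_def pt p_prob.1.
Qed.

Lemma Epop_ge0 (f : T -> R) : (forall t, 0 <= f t) -> 0 <= Epop p f.
Proof. by move=> f0; rewrite -(Epop_cst 0); apply: ler_Epop. Qed.

Lemma Epop_norm_le1 (f : T -> R) : (forall t, `|f t| <= 1) -> `|Epop p f| <= 1.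
Proof.
move=> f1; apply: le_trans (ler_norm_sum _ _ _) _; rewrite -p_prob.2.
apply: ler_sum => t _; rewrite normrM ger0_norm ?p_prob.1 //.
by rewrite ler_piMr ?p_prob.1.
Qed.

Lemma Epop_sqr_le (f : T -> R) : Epop p f ^+ 2 <= Epop p (fun t => f t ^+ 2).
Proof.
have var_ge0 : 0 <= Epop p (fun t => (f t - Epop p f) ^+ 2).
  by apply: Epop_ge0 => t; apply: sqr_ge0.
rewrite -subr_ge0; congr (_ <= _): var_ge0.
rewrite (eq_Epop (g := fun t => f t ^+ 2 + (- 2 * Epop p f * f t + Epop p f ^+ 2)));
  last by move=> t; ring.
by rewrite !EpopD EpopZ Epop_cst; ring.
Qed.

Lemma Epop_sqrt_le (f : T -> R) :
  (forall t, 0 <= f t) -> Epop p (fun t => Num.sqrt (f t)) <= Num.sqrt (Epop p f).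
Proof.
move=> f0; apply: le_trans (ler_norm _) _.
rewrite -sqrtr_sqr ler_sqrt; last exact: Epop_ge0.
apply: le_trans (Epop_sqr_le _) _.
by rewrite (eq_Epop (g := f)) // => t; rewrite sqr_sqrtr.
Qed.

End Expectation.

Section IidSample.
Variables (R : rcfType) (T : finType) (p : T -> R).

Lemma EsampleE n (F : {ffun 'I_n -> T} -> R) : Esample p F = Epop (sample_prob p) F.
Proof. by []. Qed.

Definition sample_cons n (t : T) (s : {ffun 'I_n -> T}) : {ffun 'I_n.+1 -> T} :=
  [ffun k => if unlift ord0 k is Some j then s j else t].

Lemma sample_cons0 n t (s : {ffun 'I_n -> T}) : sample_cons t s ord0 = t.
Proof. by rewrite ffunE unlift_none. Qed.

Lemma sample_consS n t (s : {ffun 'I_n -> T}) j : sample_cons t s (lift ord0 j) = s j.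
Proof. by rewrite ffunE liftK. Qed.

Lemma sample_cons_bij n :
  bijective (fun u : T * {ffun 'I_n -> T} => sample_cons u.1 u.2).
Proof.
exists (fun s : {ffun 'I_n.+1 -> T} => (s ord0, [ffun j : 'I_n => s (lift ord0 j)])).
  case=> t s /=; rewrite sample_cons0; congr pair.
  by apply/ffunP => j; rewrite ffunE sample_consS.
move=> s; apply/ffunP => k; rewrite ffunE /=.
by case: unliftP => [j ->|->]; rewrite ?ffunE.
Qed.

Lemma sample_prob_cons n t (s : {ffun 'I_n -> T}) :
  sample_prob p (sample_cons t s) = p t * sample_prob p s.
Proof.
rewrite /sample_prob big_ord_recl sample_cons0; congr (_ * _).
by apply: eq_bigr => j _; rewrite sample_consS.
Qed.

Lemma Epop_sample_cons n (F : {ffun 'I_n.+1 -> T} -> R) :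
  Epop (sample_prob p) F =
  Epop p (fun t => Epop (sample_prob p) (fun s => F (sample_cons t s))).
Proof.
rewrite /Epop (reindex _ (onW_bij _ (@sample_cons_bij n))) /=.
rewrite -(pair_bigA _ (fun t s => sample_prob p (sample_cons t s) * F (sample_cons t s))).
apply: eq_bigr => t _; rewrite big_distrr /=; apply: eq_bigr => s _.
by rewrite sample_prob_cons mulrA.
Qed.

Lemma is_prob_sample n : is_prob p -> is_prob (@sample_prob R T n p).
Proof.
move=> p_prob; split=> [s|]; first by apply: prodr_ge0 => k _; apply: p_prob.1.
suff : Epop (@sample_prob R T n p) (fun _ => 1) = 1.
  by rewrite /Epop; under eq_bigr do rewrite mulr1.
elim: n => [|n IHn].
  rewrite /Epop /sample_prob; under eq_bigr do rewrite big_ord0 mulr1.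
  by rewrite sumr_const card_ffun card_ord expn0.
by rewrite Epop_sample_cons IHn Epop_cst.
Qed.

Definition sample_sum n (X : T -> R) (s : {ffun 'I_n -> T}) : R := \sum_(k < n) X (s k).

Lemma sample_sum_cons n (X : T -> R) t (s : {ffun 'I_n -> T}) :
  sample_sum X (sample_cons t s) = X t + sample_sum X s.
Proof.
rewrite /sample_sum big_ord_recl sample_cons0; congr (_ + _).
by apply: eq_bigr => j _; rewrite sample_consS.
Qed.

Hypothesis p_prob : is_prob p.
Variables (X : T -> R) (c : R).
Hypothesis X_centered : Epop p X = 0.
Hypothesis X_sqr_le : forall t, X t ^+ 2 <= c.

Let sample_is_prob n := is_prob_sample n p_prob.

Let moment n k := Epop (@sample_prob R T n p) (fun s => sample_sum X s ^+ k).
Let shifted_moment n x k := Epop (@sample_prob R T n p) (fun s => (x + sample_sum X s) ^+ k).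

Lemma moment_cons n k : moment n.+1 k = Epop p (fun t => shifted_moment n (X t) k).
Proof.
rewrite /moment Epop_sample_cons; apply: eq_Epop => t.
by apply: eq_Epop => s; rewrite sample_sum_cons.
Qed.

Lemma moment0 k : moment 0 k.+1 = 0.
Proof. by apply: big1 => s _; rewrite /sample_sum big_ord0 expr0n mulr0. Qed.

Lemma shifted_moment1 n x : shifted_moment n x 1 = x + moment n 1.
Proof.
rewrite /moment -(Epop_cstD (sample_is_prob n)).
by apply: eq_Epop => s; rewrite !expr1.
Qed.

Lemma shifted_moment2 n x :
  shifted_moment n x 2 = x ^+ 2 + (2 * x * moment n 1 + moment n 2).
Proof.
rewrite /moment -EpopZ -EpopD -(Epop_cstD (sample_is_prob n)).
by apply: eq_Epop => s; ring.
Qed.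

Lemma shifted_moment4 n x :
  shifted_moment n x 4 = x ^+ 4 + (4 * x ^+ 3 * moment n 1
    + (6 * x ^+ 2 * moment n 2 + (4 * x * moment n 3 + moment n 4))).
Proof.
rewrite /moment -!EpopZ -!EpopD -(Epop_cstD (sample_is_prob n)).
by apply: eq_Epop => s; ring.
Qed.

Lemma sample_sum_moment1 n : moment n 1 = 0.
Proof.
elim: n => [|n IHn]; first exact: moment0.
rewrite moment_cons -X_centered; apply: eq_Epop => t.
by rewrite shifted_moment1 IHn addr0.
Qed.

Let EX2_ge0 : 0 <= Epop p (fun t => X t ^+ 2).
Proof. by apply: Epop_ge0 => // t; apply: sqr_ge0. Qed.

Let EX2_le : Epop p (fun t => X t ^+ 2) <= c.
Proof. by rewrite -(Epop_cst p_prob c); apply: ler_Epop. Qed.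

Lemma sample_sum_moment2_le n : moment n 2 <= c * n%:R.
Proof.
elim: n => [|n IHn]; first by rewrite moment0 mulr0.
rewrite moment_cons.
under eq_Epop do rewrite shifted_moment2 sample_sum_moment1 mulr0 add0r.
by rewrite EpopD Epop_cst // -[n.+1%:R]natr1 mulrDr mulr1 addrC lerD.
Qed.

Lemma sample_sum_moment4_le n : moment n 4 <= 3 * c ^+ 2 * n%:R ^+ 2.
Proof.
elim: n => [|n IHn]; first by rewrite moment0 expr0n mulr0.
rewrite moment_cons.
under eq_Epop do rewrite shifted_moment4 sample_sum_moment1 mulr0 add0r (mulrAC 6) (mulrAC 4).
rewrite !EpopD !EpopZ X_centered Epop_cst //.
have EX4_le : Epop p (fun t => X t ^+ 4) <= c ^+ 2.
  rewrite -(Epop_cst p_prob (c ^+ 2)); apply: ler_Epop => // t _.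
  rewrite (exprM _ 2 2); apply: lerXn2r; rewrite ?nnegrE ?sqr_ge0 //.
  exact: le_trans (sqr_ge0 (X t)) (X_sqr_le t).
have m2_ge0 : 0 <= moment n 2 by apply: Epop_ge0 => // s; apply: sqr_ge0.
have m2_le := sample_sum_moment2_le n.
have := ler_pM m2_ge0 EX2_ge0 m2_le EX2_le; have := sqr_ge0 c.
rewrite -[n.+1%:R]natr1; lra.
Qed.

End IidSample.

Section RealFacts.
Variable R : rcfType.

Lemma ler_distM1 (x y x' y' : R) :
  `|x| <= 1 -> `|y'| <= 1 -> `|x * y - x' * y'| <= `|x - x'| + `|y - y'|.
Proof.
move=> x1 y'1; rewrite (_ : x * y - x' * y' = x * (y - y') + (x - x') * y'); last by ring.
apply: le_trans (ler_normD _ _) _; rewrite !normrM addrC.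
by apply: lerD; [rewrite ler_piMr | rewrite ler_piMl].
Qed.

Lemma ler_dist_sqrt (u v a : R) :
  0 <= u -> 0 < a -> a <= Num.sqrt v ->
  `|Num.sqrt u - Num.sqrt v| <= `|u - v| / a.
Proof.
move=> u0 a0 av; have v0 : 0 < v by rewrite -sqrtr_gt0; apply: lt_le_trans av.
have -> : u - v = (Num.sqrt u - Num.sqrt v) * (Num.sqrt u + Num.sqrt v).
  by rewrite -subr_sqr !sqr_sqrtr // ltW.
rewrite ler_pdivlMr // normrM ler_wpM2l // ger0_norm ?addr_ge0 ?sqrtr_ge0 //.
by rewrite (le_trans av) // lerDr sqrtr_ge0.
Qed.

Lemma sqr_add3_le (x y z : R) : (x + y + z) ^+ 2 <= 3 * (x ^+ 2 + y ^+ 2 + z ^+ 2).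
Proof. by have := sqr_ge0 (x - y); have := sqr_ge0 (x - z); have := sqr_ge0 (y - z); nra. Qed.

Lemma ler_dist_ratio (P P' D D' c : R) :
  0 < c -> c <= D -> c / 2 <= D' ->
  `|P' / D' - P / D| <= 2 * `|P' * D - P * D'| / c ^+ 2.
Proof.
move=> c_gt0 cD cD'; have DD'_gt0 : 0 < D * D' by apply: mulr_gt0; lra.
rewrite (_ : P' / D' - P / D = (P' * D - P * D') / (D * D')); last by field; lra.
rewrite normrM normfV (gtr0_norm DD'_gt0) ler_pdivrMr //.
have -> : 2 * `|P' * D - P * D'| / c ^+ 2 * (D * D')
    = `|P' * D - P * D'| * (2 * (D * D') / c ^+ 2).
  by field; rewrite gt_eqF.
rewrite ler_peMr // ler_pdivlMr ?exprn_gt0 // mul1r expr2; nra.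
Qed.

Lemma sqr_dist_sg_eq (x y : R) :
  Num.sg x = Num.sg y -> (x - y) ^+ 2 = (`|x| - `|y|) ^+ 2.
Proof.
move=> sgxy; have [y0|y_neq0] := eqVneq y 0.
  by move: sgxy; rewrite y0 sgr0 => /eqP; rewrite sgr_eq0 => /eqP ->; rewrite normr0.
by rewrite {1}[x]numEsg {1}[y]numEsg sgxy -mulrBr exprMn sqr_sg y_neq0 mul1r.
Qed.

Lemma pm1_norm (x : R) : pm1 x -> `|x| = 1.
Proof. by case/orP => /eqP ->; rewrite ?normrN normr1. Qed.

Lemma pm1M (x y : R) : pm1 x -> pm1 y -> pm1 (x * y).
Proof.
by case/orP => /eqP -> /orP [] /eqP ->; rewrite /pm1 ?mulN1r ?mul1r ?opprK eqxx ?orbT.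
Qed.
End RealFacts.

Section TripletStability.
Variables (R : rcfType) (m : nat) (M M' : 'I_m -> 'I_m -> R) (i j k : 'I_m) (a : R).
Hypothesis a_gt0 : 0 < a.
Hypothesis M_le1 : forall x y, `|M x y| <= 1.
Hypothesis M'_le1 : forall x y, `|M' x y| <= 1.

Let e x y := M' x y - M x y.

Lemma triplet_abs_err_near :
  a ^+ 2 <= `|M j k| -> a <= triplet_abs M i j k -> 2 * `|e j k| <= a ^+ 2 ->
  (triplet_abs M' i j k - triplet_abs M i j k) ^+ 2
    <= 12 / a ^+ 10 * (e i j ^+ 2 + e i k ^+ 2 + e j k ^+ 2).
Proof.
rewrite /triplet_abs.
set P := `|M i j| * `|M i k|; set P' := `|M' i j| * `|M' i k|.
set D := `|M j k|; set D' := `|M' j k|; set E := `|e i j| + `|e i k| + `|e j k|.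
move=> Mjk_ge X_ge ejk_le.
have a2_gt0 : 0 < a ^+ 2 by rewrite exprn_gt0.
have dist_D : `|D - D'| <= `|e j k| by rewrite distrC ler_dist_dist.
have D'_ge : a ^+ 2 / 2 <= D' by case/ler_normlP: dist_D => _; lra.
have num_le : `|P' * D - P * D'| <= E.
  apply: le_trans (ler_distM1 _ _ _ _) _.
  - by rewrite normrM !normr_id -[1]mulr1 ler_pM.
  - by rewrite normr_id.
  apply: lerD dist_D; apply: le_trans (ler_distM1 _ _ _ _) _; rewrite ?normr_id //.
  by apply: lerD; apply: ler_dist_dist.
have X_le : `|triplet_abs M' i j k - triplet_abs M i j k| <= 2 * E / (a ^+ 2) ^+ 2 / a.
  apply: le_trans (ler_dist_sqrt _ a_gt0 X_ge) _; first by rewrite divr_ge0 ?mulr_ge0.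
  rewrite ler_pM2r ?invr_gt0 //; apply: le_trans (ler_dist_ratio _ _ a2_gt0 Mjk_ge D'_ge) _.
  by rewrite ler_pM2r ?invr_gt0 ?exprn_gt0 // ler_pM2l.
apply: le_trans (_ : (2 * E / (a ^+ 2) ^+ 2 / a) ^+ 2 <= _).
  rewrite -real_normK ?num_real //; apply: lerXn2r; rewrite ?nnegrE //.
  apply: divr_ge0 (ltW a_gt0); apply: divr_ge0 (exprn_ge0 _ (ltW a2_gt0)).
  by rewrite mulr_ge0 // !addr_ge0.
rewrite (_ : (2 * E / _ / a) ^+ 2 = 4 / a ^+ 10 * E ^+ 2); last by field; rewrite gt_eqF.
rewrite (_ : 12 / a ^+ 10 * _ = 4 / a ^+ 10 * (3 * (e i j ^+ 2 + e i k ^+ 2 + e j k ^+ 2))).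
  apply: ler_wpM2l; first by rewrite divr_ge0 ?exprn_ge0 ?ltW.
  by rewrite -!(real_normK (num_real (e _ _))) sqr_add3_le.
by ring.
Qed.

Lemma triplet_abs_err_far (N : R) :
  triplet_abs M i j k <= 1 -> 1 <= N * `|M' j k| -> a ^+ 2 <= 2 * `|e j k| ->
  (triplet_abs M' i j k - triplet_abs M i j k) ^+ 2 <= 64 * N / a ^+ 8 * e j k ^+ 4.
Proof.
move=> X_le1 ND'_ge a2_le.
have D'_gt0 : 0 < `|M' j k|.
  rewrite lt_def normr_ge0 andbT; apply/eqP => D'0.
  by move: ND'_ge; rewrite D'0 mulr0 ler10.
have N_ge1 : 1 <= N by have := M'_le1 j k; nra.
have X'2_le : triplet_abs M' i j k ^+ 2 <= N.
  rewrite sqr_sqrtr ?divr_ge0 ?mulr_ge0 // ler_pdivrMr //.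
  by apply: le_trans ND'_ge; rewrite -[1]mulr1 ler_pM.
have X2_le : triplet_abs M i j k ^+ 2 <= 1.
  by rewrite -[1](expr1n _ 2); apply: lerXn2r; rewrite ?nnegrE ?sqrtr_ge0.
have a8_le : a ^+ 8 <= 16 * e j k ^+ 4.
  have -> : 16 * e j k ^+ 4 = (2 * `|e j k|) ^+ 4.
    by rewrite exprMn -normrX ger0_norm ?exprn_even_ge0 //; ring.
  rewrite (exprM a 2 4).
  have a2_ge0 : 0 <= a ^+ 2 := exprn_ge0 2 (ltW a_gt0).
  by apply: lerXn2r; rewrite // nnegrE // mulr_ge0.
have a8_gt0 : 0 < a ^+ 8 by rewrite exprn_gt0.
apply: le_trans (_ : 4 * N <= _).
  have := sqr_ge0 (triplet_abs M' i j k + triplet_abs M i j k); nra.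
rewrite (_ : 64 * N / a ^+ 8 * _ = 4 * N * (16 * e j k ^+ 4 / a ^+ 8)); last first.
  by field; rewrite gt_eqF.
have N4_ge0 : 0 <= 4 * N by lra.
by rewrite ler_peMr // ler_pdivlMr // mul1r.
Qed.

Lemma triplet_abs_sqr_err (N : R) :
  a ^+ 2 <= `|M j k| -> a <= triplet_abs M i j k <= 1 -> 1 <= N * `|M' j k| ->
  (triplet_abs M' i j k - triplet_abs M i j k) ^+ 2
    <= 12 / a ^+ 10 * (e i j ^+ 2 + e i k ^+ 2 + e j k ^+ 2) + 64 * N / a ^+ 8 * e j k ^+ 4.
Proof.
move=> Mjk_ge /andP[X_ge X_le1] ND'_ge.
have [near|far] := leP (2 * `|e j k|) (a ^+ 2).
  apply: le_trans (triplet_abs_err_near Mjk_ge X_ge near) _; rewrite lerDl.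
  have N_ge0 : 0 <= N by have := normr_ge0 (M' j k); nra.
  apply: mulr_ge0; last exact: exprn_even_ge0.
  by apply: divr_ge0; [apply: mulr_ge0 | apply: exprn_ge0; apply: ltW].
apply: le_trans (triplet_abs_err_far X_le1 ND'_ge (ltW far)) _; rewrite lerDr.
apply: mulr_ge0; last by rewrite !addr_ge0 ?sqr_ge0.
by apply: divr_ge0 => //; apply: exprn_ge0; apply: ltW.
Qed.

End TripletStability.

Section SampleMean.
Variables (R : rcfType) (T : finType) (p : T -> R) (f : T -> R).

Lemma sample_sum_pm1_norm n (s : {ffun 'I_n -> T}) :
  (forall t, pm1 (f t)) -> sample_sum f s != 0 -> 1 <= `|sample_sum f s|.
Proof.
move=> f_pm1; have [z ->] : exists z : int, sample_sum f s = z%:~R.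
  apply: (big_ind (fun x => exists z : int, x = z%:~R)) => [|_ _ [z1 ->] [z2 ->]|k _].
  - by exists 0.
  - by exists (z1 + z2); rewrite rmorphD.
  - by case/orP: (f_pm1 (s k)) => /eqP ->; [exists 1 | exists (-1); rewrite rmorphN].
by rewrite intr_eq0 -intr_norm ler1z -normr_gt0.
Qed.

Hypothesis f_le1 : forall t, `|f t| <= 1.

Lemma sample_mean_norm_le1 n (s : {ffun 'I_n -> T}) : `|n%:R^-1 * sample_sum f s| <= 1.
Proof.
case: n s => [|n] s; first by rewrite invr0 mul0r normr0.
rewrite normrM ger0_norm ?invr_ge0 // ler_pdivrMl ?ltr0n // mulr1.
apply: le_trans (ler_norm_sum _ _ _) _.
have -> : n.+1%:R = \sum_(k < n.+1) 1 :> R by rewrite sumr_const card_ord.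
exact: ler_sum.
Qed.

Hypothesis p_prob : is_prob p.

Let X t := f t - Epop p f.

Lemma sample_mean_dev n (s : {ffun 'I_n -> T}) : (0 < n)%N ->
  n%:R^-1 * sample_sum f s - Epop p f = n%:R^-1 * sample_sum X s.
Proof.
move=> n_gt0; rewrite /sample_sum /X big_split /= sumrN sumr_const card_ord mulrDr mulrN.
by rewrite -(mulr_natl (Epop p f)) mulKf ?pnatr_eq0 -?lt0n.
Qed.

Let X_centered : Epop p X = 0.
Proof. by rewrite /X EpopD Epop_cst // subrr. Qed.

Let X_sqr_le t : X t ^+ 2 <= 4.
Proof.
have X_le : `|X t| <= 2.
  apply: le_trans (ler_normB _ _) _; have := Epop_norm_le1 p_prob f_le1; have := f_le1 t; lra.
have -> : 4 = 2 ^+ 2 :> R by rewrite expr2; lra.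
by rewrite -real_normK ?num_real //; apply: lerXn2r; rewrite ?nnegrE.
Qed.

Lemma sample_mean_dev_moment2_le n : (0 < n)%N ->
  Epop (sample_prob p) (fun s => (n%:R^-1 * @sample_sum R T n f s - Epop p f) ^+ 2) <= 4 / n%:R.
Proof.
move=> n_gt0; under eq_Epop do rewrite (sample_mean_dev _ n_gt0) exprMn.
rewrite EpopZ (_ : 4 / n%:R = n%:R^-1 ^+ 2 * (4 * n%:R)); last by field; rewrite pnatr_eq0 -lt0n.
apply: ler_wpM2l; first by rewrite exprn_ge0 ?invr_ge0.
exact: sample_sum_moment2_le.
Qed.

Lemma sample_mean_dev_moment4_le n : (0 < n)%N ->
  Epop (sample_prob p) (fun s => (n%:R^-1 * @sample_sum R T n f s - Epop p f) ^+ 4)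
    <= 48 / n%:R ^+ 2.
Proof.
move=> n_gt0; under eq_Epop do rewrite (sample_mean_dev _ n_gt0) exprMn.
rewrite EpopZ (_ : 48 / n%:R ^+ 2 = n%:R^-1 ^+ 4 * (3 * 4 ^+ 2 * n%:R ^+ 2)); last first.
  by field; rewrite pnatr_eq0 -lt0n.
apply: ler_wpM2l; first by rewrite exprn_ge0 ?invr_ge0.
exact: sample_sum_moment4_le.
Qed.
End SampleMean.

Lemma triplet_abs_rank1 (R : rcfType) (m : nat) (M : 'I_m -> 'I_m -> R) (u : 'I_m -> R)
    (i j k : 'I_m) :
  M i j = u i * u j -> M i k = u i * u k -> M j k = u j * u k -> u j * u k != 0 ->
  triplet_abs M i j k = `|u i|.
Proof.
rewrite /triplet_abs => -> -> ->; rewrite mulf_eq0 negb_or => /andP[uj_neq0 uk_neq0].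
rewrite !normrM (_ : _ / _ = `|u i| ^+ 2) ?sqrtr_sqr ?normr_id //.
by field; rewrite !normr_eq0 uj_neq0 uk_neq0.
Qed.

Section TripletEstimator.
Variables (R : rcfType) (T : finType) (m n : nat) (p : T -> R) (v Y : T -> 'I_m -> R).
Variables (tri : 'I_m -> 'I_m * 'I_m) (sg : {ffun 'I_n -> T} -> 'I_m -> R) (a : R).
Hypothesis p_prob : is_prob p.
Hypothesis v_pm1 : forall t i, pm1 (v t i).
Hypothesis Y_pm1 : forall t i, pm1 (Y t i).
Hypothesis M_factor : forall i,
  let j := (tri i).1 in let k := (tri i).2 in
  [/\ Mpop p v i j = accuracy p v Y i * accuracy p v Y j,
      Mpop p v i k = accuracy p v Y i * accuracy p v Y k &
      Mpop p v j k = accuracy p v Y j * accuracy p v Y k].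
Hypothesis n_gt0 : (0 < n)%N.
Hypothesis sg_pm1 : forall s i, pm1 (sg s i).
Hypothesis a_gt0 : 0 < a.
Hypothesis accuracy_ge : forall i, a <= `|accuracy p v Y i|.

Hypothesis ahat_sign : forall s : {ffun 'I_n -> T}, 0 < sample_prob p s ->
  forall i, Num.sg (ahat v tri sg s i) = Num.sg (accuracy p v Y i).
Hypothesis Mhat_neq0 : forall s : {ffun 'I_n -> T}, 0 < sample_prob p s ->
  forall x y, Mhat v s x y != 0.

Let acc := accuracy p v Y.
Let dev (s : {ffun 'I_n -> T}) x y := Mhat v s x y - Mpop p v x y.
Let err_bound (s : {ffun 'I_n -> T}) i :=
  let j := (tri i).1 in let k := (tri i).2 in
  12 / a ^+ 10 * (dev s i j ^+ 2 + dev s i k ^+ 2 + dev s j k ^+ 2)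
  + 64 * n%:R / a ^+ 8 * dev s j k ^+ 4.

Let vv_le1 x y t : `|v t x * v t y| <= 1.
Proof. by rewrite (pm1_norm (pm1M (v_pm1 t x) (v_pm1 t y))). Qed.

Lemma accuracy_norm_le1 i : `|acc i| <= 1.
Proof. by apply: Epop_norm_le1 => // t; rewrite (pm1_norm (pm1M (v_pm1 t i) (Y_pm1 t i))). Qed.

Lemma Mpop_norm_le1 x y : `|Mpop p v x y| <= 1.
Proof. exact: Epop_norm_le1. Qed.

Lemma Mhat_norm_le1 (s : {ffun 'I_n -> T}) x y : `|Mhat v s x y| <= 1.
Proof. exact: (sample_mean_norm_le1 (f := fun t => v t x * v t y)). Qed.

Lemma ahat_sqr_err (s : {ffun 'I_n -> T}) i : 0 < sample_prob p s ->
  (ahat v tri sg s i - acc i) ^+ 2 <= err_bound s i.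
Proof.
move=> s_supp; rewrite sqr_dist_sg_eq ?ahat_sign //.
have [Mij Mik Mjk] := M_factor i.
have acc_gt0 x : 0 < `|acc x| by apply: lt_le_trans (accuracy_ge x).
have acc_neq0 : acc (tri i).1 * acc (tri i).2 != 0 by rewrite -normr_gt0 normrM mulr_gt0.
rewrite /ahat normrM (pm1_norm (sg_pm1 s i)) mul1r ger0_norm ?sqrtr_ge0 //.
rewrite -(triplet_abs_rank1 Mij Mik Mjk acc_neq0) /err_bound /dev /=.
apply: triplet_abs_sqr_err => //; first exact: Mpop_norm_le1.
- exact: Mhat_norm_le1.
- by rewrite Mjk normrM expr2 ler_pM ?accuracy_ge ?ltW.
- by rewrite (triplet_abs_rank1 Mij Mik Mjk acc_neq0) accuracy_ge accuracy_norm_le1.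
- rewrite /Mhat normrM ger0_norm ?invr_ge0 // mulVKf ?pnatr_eq0 -?lt0n //.
  apply: (sample_sum_pm1_norm (f := fun t => v t (tri i).1 * v t (tri i).2)) => [t|].
    exact: pm1M.
  by move: (Mhat_neq0 s_supp (tri i).1 (tri i).2); rewrite /Mhat mulf_eq0 negb_or => /andP[].
Qed.

Lemma Epop_err_bound_le i :
  Epop (sample_prob p) (fun s => err_bound s i) <= 57 ^+ 2 / (a ^+ 10 * n%:R).
Proof.
have dev2 x y : Epop (sample_prob p) (fun s => dev s x y ^+ 2) <= 4 / n%:R :=
  sample_mean_dev_moment2_le (vv_le1 x y) p_prob n_gt0.
have dev4 x y : Epop (sample_prob p) (fun s => dev s x y ^+ 4) <= 48 / n%:R ^+ 2 :=
  sample_mean_dev_moment4_le (vv_le1 x y) p_prob n_gt0.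
have n_pos : 0 < n%:R :> R by rewrite ltr0n.
have a_le1 : a <= 1 := le_trans (accuracy_ge i) (accuracy_norm_le1 i).
rewrite /err_bound EpopD !EpopZ !EpopD.
apply: le_trans (_ : 12 / a ^+ 10 * (12 / n%:R) + 64 * n%:R / a ^+ 8 * (48 / n%:R ^+ 2) <= _).
  apply: lerD; apply: ler_wpM2l.
  - by apply: divr_ge0 => //; apply: exprn_ge0; apply: ltW.
  - by have := dev2 i (tri i).1; have := dev2 i (tri i).2; have := dev2 (tri i).1 (tri i).2; lra.
  - by apply: divr_ge0; [apply: mulr_ge0 | apply: exprn_ge0; apply: ltW].
  - exact: dev4.
(* 12 * (3 * 4) + 64 * 48 <= 57 ^ 2 *)
set u := (a ^+ 10 * n%:R)^-1.
have u_ge0 : 0 <= u by rewrite invr_ge0 mulr_ge0 ?exprn_ge0 ?ltW.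
have a2u_le : a ^+ 2 * u <= u by apply: ler_piMl => //; rewrite expr_le1 // ltW.
have a_neq0 : a != 0 by rewrite gt_eqF.
have n_neq0 : n%:R != 0 :> R by rewrite gt_eqF.
rewrite (_ : 12 / a ^+ 10 * _ = 144 * u); last by rewrite /u; field; rewrite n_neq0.
rewrite (_ : 64 * n%:R / a ^+ 8 * _ = 3072 * (a ^+ 2 * u)); last first.
  by rewrite /u; field; rewrite n_neq0.
lra.
Qed.

Lemma Epop_sum_sqr_err_le :
  Epop (sample_prob p) (fun s => \sum_(i < m) (ahat v tri sg s i - acc i) ^+ 2)
    <= m%:R * (57 ^+ 2 / (a ^+ 10 * n%:R)).
Proof.
have pointwise s : 0 < sample_prob p s ->
    \sum_(i < m) (ahat v tri sg s i - acc i) ^+ 2 <= \sum_(i < m) err_bound s i.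
  by move=> s_supp; apply: ler_sum => i _; apply: ahat_sqr_err.
apply: le_trans (ler_Epop (is_prob_sample n p_prob) pointwise) _.
rewrite Epop_sum; apply: le_trans (ler_sum _ (fun i _ => Epop_err_bound_le i)) _.
by rewrite sumr_const card_ord mulr_natl.
Qed.
End TripletEstimator.

Theorem lemma5 (R : rcfType) :
  exists Ca : R, forall (T : finType) (m n : nat) (p : T -> R)
    (v Y : T -> 'I_m -> R) (tri : 'I_m -> 'I_m * 'I_m)
    (sg : {ffun 'I_n -> T} -> 'I_m -> R) (amin : R),
  is_prob p ->
  (forall t i, pm1 (v t i)) ->
  (forall t i, pm1 (Y t i)) ->
  (* triplet structure: (i, j, k) distinct, E[v_a v_b] = a_a a_b *)
  (forall i, [/\ i != (tri i).1, i != (tri i).2 & (tri i).1 != (tri i).2]) ->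
  (forall i,
     let j := (tri i).1 in let k := (tri i).2 in
     [/\ Mpop p v i j = accuracy p v Y i * accuracy p v Y j,
         Mpop p v i k = accuracy p v Y i * accuracy p v Y k &
         Mpop p v j k = accuracy p v Y j * accuracy p v Y k]) ->
  (0 < n)%N ->
  (forall s i, pm1 (sg s i)) ->
  0 < amin ->
  (forall i, amin <= `|accuracy p v Y i|) ->
  (forall s, 0 < sample_prob p s -> forall i,
     [/\ amin <= `|ahat v tri sg s i|,
         Num.sg (ahat v tri sg s i) = Num.sg (accuracy p v Y i) &
         forall a b : 'I_m, Mhat v s a b != 0]) ->
  Esample p (fun s => norm2 (fun i => ahat v tri sg s i - accuracy p v Y i))
    <= Ca / amin ^+ 5 * Num.sqrt (m%:R / n%:R).
Proof.
exists 57 => T m n p v Y tri sg a p_prob v_pm1 Y_pm1 _ M_factor n_gt0 sg_pm1 a_gt0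
  acc_ge ahat_ok.
have ahat_sign (s : {ffun 'I_n -> T}) : 0 < sample_prob p s -> forall i,
    Num.sg (ahat v tri sg s i) = Num.sg (accuracy p v Y i).
  by move=> s_supp i; case: (ahat_ok s s_supp i).
have Mhat_neq0 (s : {ffun 'I_n -> T}) : 0 < sample_prob p s ->
    forall x y, Mhat v s x y != 0.
  by move=> s_supp x y; case: (ahat_ok s s_supp x) => _ _; apply.
rewrite EsampleE /norm2.
apply: le_trans (Epop_sqrt_le (is_prob_sample n p_prob) _) _ => [s|].
  by apply: sumr_ge0 => i _; apply: sqr_ge0.
have n_pos : 0 < n%:R :> R by rewrite ltr0n.
have c_ge0 : 0 <= 57 / a ^+ 5 :> R by rewrite divr_ge0 ?exprn_ge0 ?ltW.
have -> : 57 / a ^+ 5 = Num.sqrt ((57 / a ^+ 5) ^+ 2) by rewrite sqrtr_sqr ger0_norm.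
rewrite -sqrtrM ?sqr_ge0 // ler_sqrt; last by rewrite mulr_ge0 ?sqr_ge0 ?divr_ge0.
rewrite (_ : (57 / a ^+ 5) ^+ 2 * (m%:R / n%:R) = m%:R * (57 ^+ 2 / (a ^+ 10 * n%:R))).
  exact: Epop_sum_sqr_err_le.
by field; rewrite (gt_eqF n_pos) (gt_eqF a_gt0).
Qed.
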